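(* The Pacman cellular automaton $(A^{\mathbb{Z}},T)$ is cofinitely sensitive: there exists $\delta>0$ such that for every nonempty open set $U\subseteq A^{\mathbb{Z}}$, the set $N_T(U,\delta)=\{n\in\mathbb{N}:\operatorname{diam}(T^nU)>\delta\}$ is cofinite (its complement in $\mathbb{N}$ is finite).
   Context: Let $A=\{\mathtt{0},\mathtt{1},\mathtt{G},\mathtt{K},\mathtt{P},\mathtt{D}\}$. $A^{\mathbb{Z}}$ carries the metric $d(x,y)=2^{-\min\{|j|:x_j\neq y_j\}}$ for $x\neq y$ and $d(x,x)=0$ (this induces the product topology); $\operatorname{diam}$ denotes diameter with respect to $d$. The Pacman CA is the map $T:A^{\mathbb{Z}}\to A^{\mathbb{Z}}$ defined coordinatewise as follows, writing $a=x_{i-1}$, $b=x_i$, $c=x_{i+1}$: - $(Tx)_i=\mathtt{0}$ if $\big(a\in\{\mathtt{0},\mathtt{G},\mathtt{K}\}\wedge[(b\in\{\mathtt{0},\mathtt{G},\mathtt{K}\}\wedge c\in\{\mathtt{0},\mathtt{1},\mathtt{P}\})\vee(b=\mathtt{P}\wedge c\notin\{\mathtt{1},\mathtt{D}\})]\big)\vee\big(a\in\{\mathtt{1},\mathtt{D}\}\wedge[(b\in\{\mathtt{0},\mathtt{K}\}\wedge c\in\{\mathtt{0},\mathtt{1},\mathtt{P}\})\vee(b=\mathtt{P}\wedge c\notin\{\mathtt{1},\mathtt{D}\})]\big)$; - $(Tx)_i=\mathtt{1}$ if $b\in\{\mathtt{1},\mathtt{D}\}\wedge c\notin\{\mathtt{K},\mathtt{D}\}$;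 - $(Tx)_i=\mathtt{G}$ if $(a\in\{\mathtt{0},\mathtt{G},\mathtt{K}\}\wedge b\in\{\mathtt{0},\mathtt{G},\mathtt{K}\}\wedge c\in\{\mathtt{G},\mathtt{D}\})\vee(a\in\{\mathtt{1},\mathtt{D}\}\wedge b\in\{\mathtt{0},\mathtt{K}\}\wedge c=\mathtt{D})$; - $(Tx)_i=\mathtt{K}$ if $\big(c=\mathtt{K}\wedge[(a\in\{\mathtt{0},\mathtt{G},\mathtt{K}\}\wedge b\in\{\mathtt{0},\mathtt{G},\mathtt{K}\})\vee(a\in\{\mathtt{1},\mathtt{D}\}\wedge b\in\{\mathtt{0},\mathtt{K}\})]\big)\vee(a=\mathtt{P}\wedge b\notin\{\mathtt{1},\mathtt{D}\}\wedge c\in\{\mathtt{1},\mathtt{D}\})\vee(b=\mathtt{P}\wedge c\in\{\mathtt{1},\mathtt{D}\})$; - $(Tx)_i=\mathtt{P}$ if $\big(a=\mathtt{1}\wedge[(b\in\{\mathtt{0},\mathtt{K}\}\wedge c=\mathtt{G})\vee b=\mathtt{G}]\big)\vee(a=\mathtt{P}\wedge b\notin\{\mathtt{1},\mathtt{D}\}\wedge c\notin\{\mathtt{1},\mathtt{D}\})$; - $(Tx)_i=\mathtt{D}$ if $b\in\{\mathtt{1},\mathtt{D}\}\wedge c\in\{\mathtt{K},\mathtt{D}\}$. *)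

From Stdlib Require Import Bool Reals ZArith List Classical ClassicalEpsilon.
From Coquelicot Require Import Coquelicot.
Open Scope R_scope.
Open Scope bool_scope.

Inductive Sym := S0 | S1 | SG | SK | SP | SD.

Definition Sym_eqb (u v : Sym) : bool :=
  match u, v with
  | S0, S0 | S1, S1 | SG, SG | SK, SK | SP, SP | SD, SD => true
  | _, _ => false
  end.

Definition in0GK (s : Sym) : bool := match s with S0 | SG | SK => true | _ => false end.
Definition in1D  (s : Sym) : bool := match s with S1 | SD => true | _ => false end.
Definition in01P (s : Sym) : bool := match s with S0 | S1 | SP => true | _ => false end.
Definition in0K  (s : Sym) : bool := match s with S0 | SK => true | _ => false end.
Definition inKD  (s : Sym) : bool := match s with SK | SD => true | _ => false end.
Definition inGD  (s : Sym) : bool := match s with SG | SD => true | _ => false end.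
Definition isP (s : Sym) := Sym_eqb s SP.

Definition cond0 a b c : bool :=
  (in0GK a && ((in0GK b && in01P c) || (isP b && negb (in1D c))))
  || (in1D a && ((in0K b && in01P c) || (isP b && negb (in1D c)))).
Definition cond1 (a b c : Sym) : bool := in1D b && negb (inKD c).
Definition condG a b c : bool :=
  (in0GK a && in0GK b && inGD c) || (in1D a && in0K b && Sym_eqb c SD).
Definition condK a b c : bool :=
  (Sym_eqb c SK && ((in0GK a && in0GK b) || (in1D a && in0K b)))
  || (isP a && negb (in1D b) && in1D c)
  || (isP b && in1D c).
Definition condP a b c : bool :=
  (Sym_eqb a S1 && ((in0K b && Sym_eqb c SG) || Sym_eqb b SG))
  || (isP a && negb (in1D b) && negb (in1D c)).
Definition condD (a b c : Sym) : bool := in1D b && inKD c.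

(** The six conditions as written are pairwise exclusive but do not cover the
    eight triples (D,b,c) with b = G, or with b in {0,K} and c = G.  We read the
    first disjunct of the P-clause with a in {1,D} (as in the parallel 0-, G- and
    K-clauses), i.e. these triples are mapped to P. *)
Definition condP' a b c : bool :=
  (in1D a && ((in0K b && Sym_eqb c SG) || Sym_eqb b SG))
  || (isP a && negb (in1D b) && negb (in1D c)).

Definition pacman_local (a b c : Sym) : Sym :=
  if cond0 a b c then S0
  else if cond1 a b c then S1
  else if condG a b c then SG
  else if condK a b c then SK
  else if condD a b c then SD
  else SP.

Definition all_syms := S0 :: S1 :: SG :: SK :: SP :: SD :: nil.

Definition count_true (l : list bool) : nat :=
  List.length (List.filter (fun b => b) l).

Lemma pacman_conds_exclusive :
  forallb (fun a => forallb (fun b => forallb (fun c =>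
    Nat.leb (count_true (cond0 a b c :: cond1 a b c :: condG a b c ::
                         condK a b c :: condP a b c :: condD a b c :: nil)) 1)
    all_syms) all_syms) all_syms = true.
Proof. reflexivity. Qed.

Lemma pacman_local_partition :
  forallb (fun a => forallb (fun b => forallb (fun c =>
    Nat.eqb (count_true (cond0 a b c :: cond1 a b c :: condG a b c ::
                         condK a b c :: condP' a b c :: condD a b c :: nil)) 1)
    all_syms) all_syms) all_syms = true.
Proof. reflexivity. Qed.

Lemma pacman_local_spec :
  forallb (fun a => forallb (fun b => forallb (fun c =>
    let v := pacman_local a b c in
    (if cond0 a b c then Sym_eqb v S0 else true) &&
    (if cond1 a b c then Sym_eqb v S1 else true) &&
    (if condG a b c then Sym_eqb v SG else true) &&
    (if condK a b c then Sym_eqb v SK else true) &&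
    (if condP' a b c then Sym_eqb v SP else true) &&
    (if condD a b c then Sym_eqb v SD else true))
    all_syms) all_syms) all_syms = true.
Proof. reflexivity. Qed.

Definition config := Z -> Sym.

Definition pacman (x : config) : config :=
  fun i => pacman_local (x (i - 1)%Z) (x i) (x (i + 1)%Z).

(** Least k = |j| with x_j <> y_j (meaningful only when x <> y). *)
Definition is_min_diff (x y : config) (k : nat) : Prop :=
  (x (Z.of_nat k) <> y (Z.of_nat k) \/ x (- Z.of_nat k)%Z <> y (- Z.of_nat k)%Z)
  /\ forall j : Z, (Z.abs_nat j < k)%nat -> x j = y j.

Definition min_diff (x y : config) : nat :=
  epsilon (inhabits 0%nat) (is_min_diff x y).

Definition dist (x y : config) : R :=
  if excluded_middle_informative (x = y) then 0
  else / (2 ^ min_diff x y).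

Definition diam (S : config -> Prop) : Rbar :=
  Lub_Rbar (fun r => exists x y, S x /\ S y /\ r = dist x y).

Definition is_open (U : config -> Prop) : Prop :=
  forall x, U x -> exists eps, 0 < eps /\ forall y, dist x y < eps -> U y.

Definition image_iter (n : nat) (U : config -> Prop) : config -> Prop :=
  fun z => exists x, U x /\ z = Nat.iter n pacman x.

Definition N_T (U : config -> Prop) (delta : R) (n : nat) : Prop :=
  Rbar_lt (Finite delta) (diam (image_iter n U)).

From Pilot Require Import Defs.
From Stdlib Require Import Reals List ZArith Lia Arith Lra.
From Stdlib Require Import FunctionalExtensionality Classical ClassicalEpsilon.
From Coquelicot Require Import Coquelicot.
(* Re-imported so that the symbols of [Sym] shadow Coquelicot's [SP]. *)
Import Defs.
Open Scope R_scope.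

(** Cells in {1,D} are walls: the rule never creates or destroys them.  A
    wall pattern determines a "background" configuration (1 on walls, 0
    elsewhere) which is fixed by T.

    - Cleaning: if x is a solid wall outside a window [-m,m], then from some
      time on T^t x coincides with the background to the right of -m-1: in
      each gap between walls, G drifts left, P drifts right and K drifts
      left, so all of them leave the gap in finite time.
    - Sweeping: a single D placed on a wall of the background travels left,
      crossing every gap as the cycle G -> P -> K -> D and visiting every cell
      it passes; in particular it eventually changes the cell 0.

    Given a window of an open set U, the point x = (U's centre on the window,
    walls outside) and, for each late time n, the point y obtained from x by
    placing a D far to the right, inside the wall region, both lie in U; the D
    walks through the walls and starts its sweep just when x has become
    clean, so T^n x and T^n y differ at 0 and diam (T^n U) >= 1 for all large
    n.  Hence delta = 1/2 works. *)

Local Open Scope Z_scope.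

Lemma local_wall_invariant a b c : in1D (pacman_local a b c) = in1D b.
Proof. destruct a, b, c; reflexivity. Qed.

Lemma local_G_source a b c : pacman_local a b c = SG -> c = SG \/ c = SD.
Proof. destruct a, b, c; cbv; intuition congruence. Qed.

Lemma local_P_source a b c :
  pacman_local a b c = SP -> a = SP \/ (in1D a = true /\ (b = SG \/ c = SG)).
Proof. destruct a, b, c; cbv; intuition congruence. Qed.

Lemma local_K_source a b c : pacman_local a b c = SK -> c = SK \/ a = SP \/ b = SP.
Proof. destruct a, b, c; cbv; intuition congruence. Qed.

Lemma local_wall_settles a b c : in1D b = true -> (c = S0 \/ c = S1) -> pacman_local a b c = S1.
Proof. destruct a, b, c; cbv; intuition congruence. Qed.

Lemma local_left_wall_irrelevant a a' b c :
  in1D a = true -> in1D a' = true -> pacman_local a b c = pacman_local a' b c.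
Proof. destruct a, a', b, c; cbv; intuition congruence. Qed.

Lemma local_D_moves_in_wall a : pacman_local a S1 SD = SD.
Proof. destruct a; reflexivity. Qed.

Lemma nonwall_cases s : in1D s = false -> s = S0 \/ s = SG \/ s = SK \/ s = SP.
Proof. destruct s; simpl; intuition congruence. Qed.

Definition orbit (x : config) (t : nat) : config := Nat.iter t pacman x.

Lemma orbit_S x t z :
  orbit x (S t) z = pacman_local (orbit x t (z - 1)) (orbit x t z) (orbit x t (z + 1)).
Proof. reflexivity. Qed.

Definition walls (x : config) (z : Z) : bool := in1D (x z).

Lemma walls_invariant x t z : in1D (orbit x t z) = walls x z.
Proof.
  revert z; induction t as [|t IH]; intros z; [reflexivity|].
  rewrite orbit_S, local_wall_invariant. apply IH.
Qed.

Lemma solid_right_walls x m : (forall z, m < z -> x z = S1) ->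
  forall t z, m < z -> orbit x t z = S1.
Proof.
  intros Hx t; induction t as [|t IH]; intros z Hz; [now apply Hx|].
  rewrite orbit_S, (IH z), (IH (z + 1)) by lia.
  now destruct (orbit x t (z - 1)).
Qed.

Definition background (wl : Z -> bool) (z : Z) : Sym := if wl z then S1 else S0.

Definition defect (wl : Z -> bool) (k : Sym) (q : Z) : config :=
  fun z => if z =? q then k else background wl z.

Ltac decide_positions :=
  repeat match goal with |- context [Z.eqb ?a ?b] =>
    destruct (Z.eqb_spec a b); try (exfalso; lia) end.

Lemma pacman_defect wl k q z :
  pacman (defect wl k q) z =
  if z =? q - 1 then pacman_local (background wl (q - 2)) (background wl (q - 1)) k
  else if z =? q then pacman_local (background wl (q - 1)) k (background wl (q + 1))
  else if z =? q + 1 then pacman_local k (background wl (q + 1)) (background wl (q + 2))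
  else background wl z.
Proof.
  unfold pacman, defect.
  destruct (Z.eqb_spec z (q - 1)).
  { subst z; decide_positions. now replace (q - 1 - 1) with (q - 2) by lia. }
  destruct (Z.eqb_spec z q).
  { now subst z; decide_positions. }
  destruct (Z.eqb_spec z (q + 1)).
  { subst z; decide_positions. now replace (q + 1 + 1) with (q + 2) by lia. }
  decide_positions. unfold background.
  now destruct (wl (z - 1)), (wl z), (wl (z + 1)).
Qed.

Ltac defect_transition :=
  intros; apply functional_extensionality; let z := fresh "z" in intro z;
  rewrite pacman_defect; unfold defect; decide_positions; try subst z;
  unfold background;
  repeat match goal with |- context [?w ?a] =>
    match type of (w a) with bool => destruct (w a) eqn:? end end;
  try congruence; reflexivity.

Section Transitions.
Variable wl : Z -> bool.

Lemma D_to_wall q : wl q = true -> wl (q - 1) = true ->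
  pacman (defect wl SD q) = defect wl SD (q - 1).
Proof. defect_transition. Qed.
Lemma D_to_G q : wl q = true -> wl (q - 1) = false ->
  pacman (defect wl SD q) = defect wl SG (q - 1).
Proof. defect_transition. Qed.

Lemma G_drift q : wl q = false -> wl (q - 1) = false -> wl (q - 2) = false ->
  pacman (defect wl SG q) = defect wl SG (q - 1).
Proof. defect_transition. Qed.
Lemma G_to_P_far q : wl q = false -> wl (q - 1) = false -> wl (q - 2) = true ->
  pacman (defect wl SG q) = defect wl SP (q - 1).
Proof. defect_transition. Qed.
Lemma G_to_P_near q : wl q = false -> wl (q - 1) = true ->
  pacman (defect wl SG q) = defect wl SP q.
Proof. defect_transition. Qed.

Lemma P_drift q : wl q = false -> wl (q + 1) = false -> wl (q + 2) = false ->
  pacman (defect wl SP q) = defect wl SP (q + 1).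
Proof. defect_transition. Qed.
Lemma P_to_K_far q : wl q = false -> wl (q + 1) = false -> wl (q + 2) = true ->
  pacman (defect wl SP q) = defect wl SK (q + 1).
Proof. defect_transition. Qed.
Lemma P_to_K_near q : wl q = false -> wl (q + 1) = true ->
  pacman (defect wl SP q) = defect wl SK q.
Proof. defect_transition. Qed.

Lemma K_drift q : wl q = false -> wl (q - 1) = false ->
  pacman (defect wl SK q) = defect wl SK (q - 1).
Proof. defect_transition. Qed.
Lemma K_to_D q : wl q = false -> wl (q - 1) = true ->
  pacman (defect wl SK q) = defect wl SD (q - 1).
Proof. defect_transition. Qed.

End Transitions.

Lemma nearest_wall_left (wl : Z -> bool) lo j : wl lo = true -> lo < j ->
  exists l, lo <= l < j /\ wl l = true /\ forall z, l < z < j -> wl z = false.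
Proof.
  intros Hlo Hj.
  assert (H : forall d : nat, forall j, j = lo + 1 + Z.of_nat d ->
            exists l, lo <= l < j /\ wl l = true /\ forall z, l < z < j -> wl z = false).
  { induction d as [|d IH]; intros j' Hj'.
    - exists lo. repeat split; auto; lia.
    - destruct (wl (j' - 1)) eqn:E.
      + exists (j' - 1). repeat split; auto; lia.
      + destruct (IH (j' - 1) ltac:(lia)) as [l [Hl [Hwl Hgap]]].
        exists l. repeat split; auto; try lia.
        intros z Hz. destruct (Z.eq_dec z (j' - 1)); [congruence | apply Hgap; lia]. }
  apply (H (Z.to_nat (j - lo - 1))). lia.
Qed.

(** ** The sweep of a D through a background *)

Section Sweep.
Variable init : config.
Variable wl : Z -> bool.

Definition reaches (k : Sym) (q : Z) : Prop :=
  exists s, Nat.iter s pacman init = defect wl k q.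

Definition visited (z : Z) : Prop :=
  exists s, Nat.iter s pacman init z <> background wl z.

Lemma reaches_step k q k' q' q'' :
  reaches k q -> pacman (defect wl k q) = defect wl k' q'' -> q'' = q' -> reaches k' q'.
Proof. intros [s Hs] H <-. exists (S s). simpl. now rewrite Hs. Qed.

Lemma reaches_visited k q : reaches k q -> k <> S0 -> k <> S1 -> visited q.
Proof.
  intros [s Hs] H0 H1. exists s. rewrite Hs. unfold defect, background.
  rewrite Z.eqb_refl. now destruct (wl q).
Qed.

Lemma reaches_drift_left k lo hi :
  (forall q, lo < q <= hi -> pacman (defect wl k q) = defect wl k (q - 1)) ->
  reaches k hi -> forall q, lo <= q <= hi -> reaches k q.
Proof.
  intros Hstep Hhi.
  assert (H : forall d : nat, lo <= hi - Z.of_nat d -> reaches k (hi - Z.of_nat d)).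
  { induction d as [|d IH]; intros Hd.
    - now rewrite Z.sub_0_r.
    - apply reaches_step with k (hi - Z.of_nat d) (hi - Z.of_nat d - 1);
        [apply IH | apply Hstep |]; lia. }
  intros q Hq. replace q with (hi - Z.of_nat (Z.to_nat (hi - q))) by lia. apply H. lia.
Qed.

Lemma reaches_drift_right k lo hi :
  (forall q, lo <= q < hi -> pacman (defect wl k q) = defect wl k (q + 1)) ->
  reaches k lo -> forall q, lo <= q <= hi -> reaches k q.
Proof.
  intros Hstep Hlo.
  assert (H : forall d : nat, lo + Z.of_nat d <= hi -> reaches k (lo + Z.of_nat d)).
  { induction d as [|d IH]; intros Hd.
    - now rewrite Z.add_0_r.
    - apply reaches_step with k (lo + Z.of_nat d) (lo + Z.of_nat d + 1);
        [apply IH | apply Hstep |]; lia. }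
  intros q Hq. replace q with (lo + Z.of_nat (Z.to_nat (q - lo))) by lia. apply H. lia.
Qed.

Section Gap.
Variables l j : Z.
Hypothesis left_wall : wl l = true.
Hypothesis right_wall : wl j = true.
Hypothesis gap : forall z, l < z < j -> wl z = false.
Hypothesis gap_nonempty : l < j - 1.

Lemma gap_G_bounces : reaches SD j -> reaches SP (l + 1).
Proof.
  intros HD.
  assert (HG : reaches SG (j - 1)).
  { eapply reaches_step; [exact HD | apply D_to_G; auto; apply gap; lia | lia]. }
  destruct (Z.eq_dec (j - 1) (l + 1)) as [E|E].
  - eapply reaches_step; [exact HG | apply G_to_P_near | lia];
      [apply gap; lia | now replace (j - 1 - 1) with l by lia].
  - assert (HG' : reaches SG (l + 2)).
    { apply (reaches_drift_left SG (l + 2) (j - 1)); auto; try lia.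
      intros q Hq. apply G_drift; apply gap; lia. }
    eapply reaches_step; [exact HG' | apply G_to_P_far | lia];
      [apply gap; lia | apply gap; lia | now replace (l + 2 - 2) with l by lia].
Qed.

Lemma gap_P_bounces : reaches SP (l + 1) -> reaches SK (j - 1).
Proof.
  intros HP.
  destruct (Z.eq_dec (l + 1) (j - 1)) as [E|E].
  - eapply reaches_step; [exact HP | apply P_to_K_near | lia];
      [apply gap; lia | now replace (l + 1 + 1) with j by lia].
  - assert (HP' : reaches SP (j - 2)).
    { apply (reaches_drift_right SP (l + 1) (j - 2)); auto; try lia.
      intros q Hq. apply P_drift; apply gap; lia. }
    eapply reaches_step; [exact HP' | apply P_to_K_far | lia];
      [apply gap; lia | apply gap; lia | now replace (j - 2 + 2) with j by lia].
Qed.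

Lemma gap_crossing : reaches SD j ->
  reaches SD l /\ forall z, l < z < j -> visited z.
Proof.
  intros HD.
  assert (HK : forall q, l + 1 <= q <= j - 1 -> reaches SK q).
  { apply (reaches_drift_left SK (l + 1) (j - 1)).
    - intros q Hq. apply K_drift; apply gap; lia.
    - now apply gap_P_bounces, gap_G_bounces. }
  split.
  - eapply reaches_step; [apply (HK (l + 1)); lia | apply K_to_D | lia];
      [apply gap; lia | now replace (l + 1 - 1) with l by lia].
  - intros z Hz. apply (reaches_visited SK); [apply HK; lia | discriminate..].
Qed.

End Gap.

Lemma sweep lo : wl lo = true -> forall j, wl j = true -> lo < j -> reaches SD j ->
  forall z, lo < z <= j -> visited z.
Proof.
  intros Hlo.
  assert (H : forall d : nat, forall j, Z.to_nat (j - lo) = d -> wl j = true -> lo < j ->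
            reaches SD j -> forall z, lo < z <= j -> visited z).
  { induction d as [d IH] using lt_wf_ind. intros j Hd Hj Hlj HD z Hz.
    destruct (Z.eq_dec z j) as [->|Hzj].
    { apply (reaches_visited SD); [exact HD | discriminate..]. }
    destruct (nearest_wall_left wl lo j Hlo Hlj) as [l [Hl [Hwl Hgap]]].
    assert (HDl : reaches SD l /\ forall z, l < z < j -> visited z).
    { destruct (Z.eq_dec l (j - 1)) as [E|E].
      - split; [|intros; lia].
        eapply reaches_step; [exact HD | apply D_to_wall; auto; congruence | lia].
      - apply gap_crossing; auto; lia. }
    destruct HDl as [HDl Hvis].
    destruct (Z_lt_le_dec l z); [apply Hvis; lia|].
    apply (IH (Z.to_nat (l - lo))) with l; auto; lia. }
  intros j. now apply (H (Z.to_nat (j - lo))).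
Qed.

End Sweep.

(** ** Cleaning: transient symbols leave every gap *)

(** A property [B] of space-time points that, inside the interval (l, i),
    can only hold where it held one step earlier one cell to the side [e],
    has disappeared from (l, i) after i - l further steps. *)
Lemma transient_signal (B : nat -> Z -> Prop) (l i e : Z) (T : nat) :
  e = 1 \/ e = -1 ->
  (forall t z, (T <= t)%nat -> l < z < i -> B (S t) z -> l < z + e < i /\ B t (z + e)) ->
  forall t z, (T + Z.to_nat (i - l) <= t)%nat -> l < z < i -> ~ B t z.
Proof.
  intros He Hback.
  assert (Hrun : forall (k : nat) t z, (T + k <= t)%nat -> l < z < i -> B t z ->
             l < z + Z.of_nat k * e < i).
  { induction k as [|k IH]; intros t z Ht Hz HB; [lia|].
    destruct t as [|t]; [lia|].
    destruct (Hback t z ltac:(lia) Hz HB) as [Hz' HB'].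
    specialize (IH t (z + e) ltac:(lia) Hz' HB'). destruct He; subst e; lia. }
  intros t z Ht Hz HB. specialize (Hrun _ t z Ht Hz HB). destruct He; subst e; lia.
Qed.

Definition clean_from (x : config) (i : Z) : Prop :=
  exists T, forall t, (T <= t)%nat -> forall z, i <= z -> orbit x t z = background (walls x) z.

Section CleanGap.
Variable x : config.
Variables (l i : Z) (T : nat).
Hypothesis left_wall : walls x l = true.
Hypothesis gap : forall z, l < z < i -> walls x z = false.
Hypothesis clean_right : forall t, (T <= t)%nat -> forall z, i <= z ->
  orbit x t z = background (walls x) z.

Let L := Z.to_nat (i - l).

Lemma clean_right_plain t : (T <= t)%nat -> orbit x t i = S0 \/ orbit x t i = S1.
Proof. intros Ht. rewrite clean_right by lia. unfold background. now destruct (walls x i); auto. Qed.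

Lemma left_wall_not_transient t k : in1D k = false -> orbit x t l <> k.
Proof. intros Hk E. pose proof (walls_invariant x t l) as W. congruence. Qed.

Lemma gap_not_wall t z k : l < z < i -> in1D k = true -> orbit x t z <> k.
Proof. intros Hz Hk E. pose proof (walls_invariant x t z) as W. rewrite gap in W; congruence. Qed.

(** G moves left, so it leaves the gap first ... *)
Lemma gap_no_G t z : (T + L <= t)%nat -> l < z < i -> orbit x t z <> SG.
Proof.
  apply (transient_signal (fun t z => orbit x t z = SG) l i 1 T); [now left|].
  intros t' z' Ht' Hz' E. rewrite orbit_S in E. apply local_G_source in E.
  destruct (Z.eq_dec (z' + 1) i) as [Ei|Ei].
  - rewrite Ei in E. destruct (clean_right_plain t' Ht') as [C|C];
      rewrite C in E; destruct E; discriminate.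
  - split; [lia|]. destruct E as [E|E]; auto.
    exfalso. apply (gap_not_wall t' (z' + 1) SD); auto; lia.
Qed.

(** ... then P, which moves right once no G is left ... *)
Lemma gap_no_P t z : (T + L + L <= t)%nat -> l < z < i -> orbit x t z <> SP.
Proof.
  apply (transient_signal (fun t z => orbit x t z = SP) l i (-1) (T + L)); [now right|].
  intros t' z' Ht' Hz' E. rewrite orbit_S in E. apply local_P_source in E.
  destruct E as [E|[_ [E|E]]].
  - destruct (Z.eq_dec (z' - 1) l) as [El|El].
    + rewrite El in E. exfalso. now apply (left_wall_not_transient t' SP).
    + split; [lia|]. now replace (z' + -1) with (z' - 1) by lia.
  - exfalso. exact (gap_no_G t' z' Ht' Hz' E).
  - exfalso. destruct (Z.eq_dec (z' + 1) i) as [Ei|Ei].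
    + rewrite Ei in E. destruct (clean_right_plain t' ltac:(lia)) as [C|C]; congruence.
    + exact (gap_no_G t' (z' + 1) Ht' ltac:(lia) E).
Qed.

(** ... then K, which moves left once no P is left. *)
Lemma gap_no_K t z : (T + L + L + L <= t)%nat -> l < z < i -> orbit x t z <> SK.
Proof.
  apply (transient_signal (fun t z => orbit x t z = SK) l i 1 (T + L + L)); [now left|].
  intros t' z' Ht' Hz' E. rewrite orbit_S in E. apply local_K_source in E.
  destruct E as [E|[E|E]].
  - destruct (Z.eq_dec (z' + 1) i) as [Ei|Ei].
    + rewrite Ei in E. exfalso.
      destruct (clean_right_plain t' ltac:(lia)) as [C|C]; congruence.
    + split; [lia | exact E].
  - exfalso. destruct (Z.eq_dec (z' - 1) l) as [El|El].
    + rewrite El in E. now apply (left_wall_not_transient t' SP).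
    + exact (gap_no_P t' (z' - 1) Ht' ltac:(lia) E).
  - exfalso. exact (gap_no_P t' z' Ht' Hz' E).
Qed.

Lemma gap_cleans : clean_from x (l + 1).
Proof.
  exists (T + L + L + L)%nat. intros t Ht z Hz.
  destruct (Z_lt_le_dec z i) as [Hzi|Hzi]; [|apply clean_right; lia].
  unfold background. rewrite gap by lia.
  assert (W := walls_invariant x t z). rewrite gap in W by lia.
  destruct (nonwall_cases _ W) as [E|[E|[E|E]]]; auto; exfalso.
  - exact (gap_no_G t z ltac:(lia) ltac:(lia) E).
  - exact (gap_no_K t z Ht ltac:(lia) E).
  - exact (gap_no_P t z ltac:(lia) ltac:(lia) E).
Qed.

End CleanGap.

Lemma wall_settles x i : walls x (i - 1) = true -> clean_from x i -> clean_from x (i - 1).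
Proof.
  intros Hw [T HT]. exists (S T). intros t Ht z Hz.
  destruct (Z.eq_dec z (i - 1)) as [->|Hz']; [|apply HT; lia].
  destruct t as [|t]; [lia|].
  rewrite orbit_S. unfold background. rewrite Hw.
  apply local_wall_settles; [now rewrite walls_invariant|].
  replace (i - 1 + 1) with i by lia. rewrite HT by lia.
  unfold background. destruct (walls x i); auto.
Qed.

Lemma clean_down_to_wall x lo : walls x lo = true ->
  forall j, lo < j -> clean_from x j -> clean_from x lo.
Proof.
  intros Hlo.
  assert (H : forall d : nat, forall j, Z.to_nat (j - lo) = d -> lo < j ->
            clean_from x j -> clean_from x lo).
  { induction d as [d IH] using lt_wf_ind. intros j Hd Hj Hclean.
    destruct (nearest_wall_left (walls x) lo j Hlo Hj) as [l [Hl [Hwl Hgap]]].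
    assert (Hcl : clean_from x l).
    { replace l with (l + 1 - 1) by lia. apply wall_settles.
      - now replace (l + 1 - 1) with l by lia.
      - destruct Hclean as [T HT]. exact (gap_cleans x l j T Hwl Hgap HT). }
    destruct (Z.eq_dec l lo) as [->|Hne]; [exact Hcl|].
    apply (IH (Z.to_nat (l - lo))) with l; auto; lia. }
  intros j. now apply (H (Z.to_nat (j - lo))).
Qed.

Lemma wall_shields u v lo :
  (forall z, lo < z -> u z = v z) -> in1D (u lo) = true -> in1D (v lo) = true ->
  forall s z, lo < z -> orbit u s z = orbit v s z.
Proof.
  intros Huv Hu Hv s. induction s as [|s IH]; intros z Hz; [now apply Huv|].
  rewrite !orbit_S, (IH z), (IH (z + 1)) by lia.
  destruct (Z.eq_dec (z - 1) lo) as [E|E].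
  - rewrite E. apply local_left_wall_irrelevant; rewrite walls_invariant; unfold walls; auto.
  - now rewrite (IH (z - 1)) by lia.
Qed.

Lemma D_walks_in_wall x m p : (forall z, m < z -> x z = S1) -> m + 1 < p ->
  forall t, Z.of_nat t <= p - m - 1 -> forall z,
  orbit (fun z => if z =? p then SD else x z) t z =
  if z =? p - Z.of_nat t then SD else orbit x t z.
Proof.
  intros Hx Hp t. induction t as [|t IH]; intros Ht z.
  - now rewrite Z.sub_0_r.
  - assert (Solid := solid_right_walls x m Hx t).
    rewrite !orbit_S, !IH by lia.
    set (c := p - Z.of_nat t).
    replace (p - Z.of_nat (S t)) with (c - 1) by (unfold c; lia).
    destruct (Z.eq_dec z (c - 1)) as [->|E1].
    + decide_positions. rewrite (Solid (c - 1)) by (unfold c; lia).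
      replace (c - 1 + 1) with c by lia. apply local_D_moves_in_wall.
    + destruct (Z.eq_dec z c) as [->|E2]; [decide_positions; now rewrite !Solid by (unfold c; lia)|].
      destruct (Z.eq_dec z (c + 1)) as [->|E3]; [decide_positions; now rewrite !Solid by (unfold c; lia)|].
      now decide_positions.
Qed.

(** ** Late perturbations *)
Lemma late_perturbation x m : 0 <= m ->
  (forall z, m < z -> x z = S1) -> (forall z, z < - m -> x z = S1) ->
  exists N : nat, forall n, (N <= n)%nat ->
    exists y, (forall z, - m <= z <= m -> y z = x z) /\ orbit y n 0 <> orbit x n 0.
Proof.
  intros Hm Hright Hleft.
  set (wl := walls x).
  assert (Hlo : wl (- m - 1) = true) by (unfold wl, walls; now rewrite Hleft by lia).
  assert (Hhi : wl (m + 1) = true) by (unfold wl, walls; now rewrite Hright by lia).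
  (* x becomes clean right of the wall -m-1 after some time TA ... *)
  assert (Hclean : clean_from x (- m - 1)).
  { apply clean_down_to_wall with (m + 1); auto; [lia|].
    exists 0%nat. intros t _ z Hz. rewrite (solid_right_walls x m Hright t z) by lia.
    unfold background, walls. now rewrite Hright by lia. }
  destruct Hclean as [TA HTA].
  (* ... and a D on the wall m+1 of the background visits 0 after s steps. *)
  set (init := defect wl SD (m + 1)).
  destruct (sweep init wl (- m - 1) Hlo (m + 1) Hhi ltac:(lia)
              (ex_intro _ 0%nat eq_refl) 0 ltac:(lia)) as [s Hs].
  exists (S (TA + s)). intros n Hn.
  (* A D put k = n - s cells right of m+1 reaches m+1 at time k >= TA. *)
  set (k := (n - s)%nat).
  set (y := fun z => if z =? m + 1 + Z.of_nat k then SD else x z).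
  exists y. split.
  { intros z Hz. unfold y. destruct (Z.eqb_spec z (m + 1 + Z.of_nat k)); [lia | auto]. }
  assert (Hyk : forall z, orbit y k z = if z =? m + 1 then SD else orbit x k z).
  { intros z. unfold y. rewrite (D_walks_in_wall x m) by (auto; lia).
    now replace (m + 1 + Z.of_nat k - Z.of_nat k) with (m + 1) by lia. }
  assert (Hshield : forall z, - m - 1 < z ->
            Nat.iter s pacman (orbit y k) z = Nat.iter s pacman init z).
  { apply (wall_shields (orbit y k) init (- m - 1)).
    - intros z Hz. rewrite Hyk. unfold init, defect.
      destruct (z =? m + 1); [reflexivity | apply HTA; lia].
    - rewrite Hyk. decide_positions. now rewrite walls_invariant.
    - unfold init, defect, background. decide_positions. now rewrite Hlo. }
  replace n with (s + k)%nat by lia. unfold orbit at 1. rewrite Nat.iter_add.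
  fold (orbit y k). rewrite Hshield, HTA by lia.
  exact Hs.
Qed.

(** ** The metric *)

Local Close Scope Z_scope.

Lemma least_nat (P : nat -> Prop) n : P n -> exists k, P k /\ forall k', (k' < k)%nat -> ~ P k'.
Proof.
  induction n as [n IH] using lt_wf_ind. intros Hn.
  destruct (classic (exists k', (k' < n)%nat /\ P k')) as [[k' [Hk' Pk']]|Hmin].
  - exact (IH k' Hk' Pk').
  - exists n. split; auto. intros k' Hk' Pk'. apply Hmin. eauto.
Qed.

Lemma min_diff_spec x y : x <> y -> is_min_diff x y (min_diff x y).
Proof.
  intros Hxy. unfold min_diff. apply epsilon_spec.
  assert (Hex : exists j, x j <> y j).
  { apply NNPP. intros H. apply Hxy, functional_extensionality. intros j.
    apply NNPP. intros Hj. apply H. eauto. }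
  destruct Hex as [j Hj].
  destruct (least_nat (fun k => exists j, Z.abs_nat j = k /\ x j <> y j) (Z.abs_nat j))
    as [k [[j' [Hj' Hdiff]] Hmin]]; eauto.
  exists k. split.
  - destruct (Z_le_gt_dec 0 j').
    + left. now replace (Z.of_nat k) with j' by lia.
    + right. now replace (- Z.of_nat k)%Z with j' by lia.
  - intros j0 Hj0. apply NNPP. intros H. apply (Hmin _ Hj0). eauto.
Qed.

Lemma dist_le_of_agree x y (M : nat) :
  (forall z, (- Z.of_nat M <= z <= Z.of_nat M)%Z -> x z = y z) -> dist x y <= / 2 ^ S M.
Proof.
  intros H. unfold dist. destruct excluded_middle_informative as [_|Hxy].
  - left. apply Rinv_0_lt_compat, pow_lt. lra.
  - destruct (min_diff_spec x y Hxy) as [Hd _].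
    assert (HM : (S M <= min_diff x y)%nat).
    { destruct (Nat.le_gt_cases (S M) (min_diff x y)); auto.
      exfalso. destruct Hd as [Hd|Hd]; apply Hd, H; lia. }
    apply Rinv_le_contravar; [apply pow_lt; lra | apply Rle_pow; auto; lra].
Qed.

Lemma dist_one_of_origin x y : x 0%Z <> y 0%Z -> dist x y = 1.
Proof.
  intros H. unfold dist. destruct excluded_middle_informative as [->|Hxy]; [tauto|].
  destruct (min_diff_spec x y Hxy) as [_ Hd].
  destruct (min_diff x y) as [|k]; [simpl; lra|].
  exfalso. apply H, Hd. simpl. lia.
Qed.

Lemma open_contains_window U x0 : is_open U -> U x0 ->
  exists M : nat, forall y, (forall z, (- Z.of_nat M <= z <= Z.of_nat M)%Z -> y z = x0 z) -> U y.
Proof.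
  intros HU Hx0. destruct (HU x0 Hx0) as [eps [Heps Hball]].
  destruct (pow_lt_1_zero (/ 2) ltac:(rewrite Rabs_pos_eq; lra) eps Heps) as [M HM].
  exists M. intros y Hy. apply Hball.
  apply Rle_lt_trans with (/ 2 ^ S M).
  - apply dist_le_of_agree. intros z Hz. symmetry. now apply Hy.
  - rewrite <- pow_inv. specialize (HM (S M) ltac:(lia)).
    rewrite Rabs_pos_eq in HM; [exact HM | apply pow_le; lra].
Qed.

Lemma diam_ge_dist (S : config -> Prop) a b : S a -> S b -> Rbar_le (dist a b) (diam S).
Proof.
  intros Ha Hb. unfold diam.
  destruct (Lub_Rbar_correct (fun r => exists a b, S a /\ S b /\ r = dist a b)) as [Hub _].
  apply Hub. eauto.
Qed.

Definition walled (x0 : config) (m : Z) : config :=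
  fun z => if ((- m <=? z) && (z <=? m))%Z then x0 z else S1.

Lemma walled_inside x0 m z : (- m <= z <= m)%Z -> walled x0 m z = x0 z.
Proof. intros Hz. unfold walled. now rewrite (proj2 (Z.leb_le _ _)), (proj2 (Z.leb_le _ _)) by lia. Qed.

Lemma walled_outside x0 m z : (z < - m \/ m < z)%Z -> walled x0 m z = S1.
Proof.
  intros Hz. unfold walled.
  destruct (Z.leb_spec (- m) z), (Z.leb_spec z m); simpl; auto; lia.
Qed.

Theorem mainTheorem2 :
  exists delta : R, 0 < delta /\
    forall U : config -> Prop,
      is_open U -> (exists x, U x) ->
      exists l : list nat, forall n : nat, ~ N_T U delta n -> In n l.
Proof.
  exists (1 / 2). split; [lra|].
  intros U HU [x0 Hx0].
  destruct (open_contains_window U x0 HU Hx0) as [M HM].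
  set (m := Z.of_nat M). set (x := walled x0 m).
  assert (HxU : forall y, (forall z, (- m <= z <= m)%Z -> y z = x z) -> U y).
  { intros y Hy. apply HM. intros z Hz. rewrite Hy by lia. now apply walled_inside. }
  destruct (late_perturbation x m ltac:(lia)) as [N HN];
    [intros; apply walled_outside; lia..|].
  exists (seq 0 N). intros n Hn. apply in_seq.
  destruct (Nat.lt_ge_cases n N) as [Hlt|Hge]; [lia|].
  exfalso. apply Hn.
  destruct (HN n Hge) as [y [Hyx Hdiff]].
  apply Rbar_lt_le_trans with (Finite 1); [simpl; lra|].
  rewrite <- (dist_one_of_origin (orbit y n) (orbit x n) Hdiff).
  apply diam_ge_dist; [exists y | exists x]; split; auto; reflexivity.
Qed.
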